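(* Let $\mathbf X$ be a totally bounded metric space and $\gamma>0$ such that $\mathcal H_\epsilon(\mathbf X)\asymp(1/\epsilon)^\gamma$ as $\epsilon\to0$. Let $\beta\in(0,1]$, $c>0$, $B>0$, and let $\mathcal F$ be the set of functions $F:\mathbf X\to\mathbb R$ with $\sup_x|F(x)|\le B$ that are Hölder continuous of order $\beta$ with coefficient $c$. There exists a strategy for Predictor such that for every $F\in\mathcal F$ there is $N_0$ such that for all $N\ge N_0$ and all moves of Reality $$\sum_{n=1}^N(y_n-\mu_n)^2\le\sum_{n=1}^N(y_n-F(x_n))^2+C_{\beta,\gamma}\,c\,\frac{N}{\log^{\beta/\gamma}N},$$ where $C_{\beta,\gamma}$ is a constant depending only on $\beta$, $\gamma$ (and on $\mathbf X$ through the implicit constants in the relation $\asymp$), but not on $c$, $F$ or $N$.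
   Context: Protocol: at each round $n$ Reality announces $x_n\in\mathbf X$, Predictor announces $\mu_n\in\mathbb R$, Reality announces $y_n\in[-1,1]$; a strategy for Predictor maps each history to $\mu_n$. $\mathcal H_\epsilon(A)$ is $\log_2$ of the minimal number of points of $A$ forming an $\epsilon$-net for $A$ (in the relevant metric). $f\asymp g$ means $f=O(g)$ and $g=O(f)$ as $\epsilon\to0$. $F$ is Hölder continuous of order $\beta$ with coefficient $c$ if $|F(x)-F(x')|\le c\,\rho(x,x')^\beta$ for all $x,x'$, $\rho$ the metric of $\mathbf X$. $\log=\log_2$. *)

From Stdlib Require Import Reals List.
Import ListNotations.
Open Scope R_scope.

Definition is_metric {X : Type} (rho : X -> X -> R) : Prop :=
  (forall x y, 0 <= rho x y) /\
  (forall x y, rho x y = 0 <-> x = y) /\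
  (forall x y, rho x y = rho y x) /\
  (forall x y z, rho x z <= rho x y + rho y z).

Definition is_eps_net {X : Type} (rho : X -> X -> R) (eps : R) (net : list X) : Prop :=
  forall x : X, exists y, In y net /\ rho x y <= eps.

Definition totally_bounded {X : Type} (rho : X -> X -> R) : Prop :=
  forall eps, 0 < eps -> exists net : list X, is_eps_net rho eps net.

Definition is_min_net_size {X : Type} (rho : X -> X -> R) (eps : R) (n : nat) : Prop :=
  (exists net : list X, length net = n /\ is_eps_net rho eps net) /\
  (forall net : list X, is_eps_net rho eps net -> (n <= length net)%nat).

Definition log2 (t : R) : R := ln t / ln 2.

Definition rpow (t a : R) : R := if Rle_dec t 0 then 0 else Rpower t a.

(* H_eps(X) ≍ (1/eps)^gamma as eps -> 0, where H_eps = log2 of minimal net size *)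
Definition entropy_asymp {X : Type} (rho : X -> X -> R) (gamma : R) : Prop :=
  exists a b eps0 : R, 0 < a /\ 0 < b /\ 0 < eps0 /\
    forall eps n, 0 < eps < eps0 -> is_min_net_size rho eps n ->
      a * rpow (1 / eps) gamma <= log2 (INR n) <= b * rpow (1 / eps) gamma.

Definition holder {X : Type} (rho : X -> X -> R) (beta c : R) (F : X -> R) : Prop :=
  forall x x', Rabs (F x - F x') <= c * rpow (rho x x') beta.

Fixpoint rsum (f : nat -> R) (N : nat) : R :=
  match N with
  | O => 0
  | S k => rsum f k + f (S k)
  end.

(* A Predictor strategy: from the history ((x_1,y_1),...,(x_{n-1},y_{n-1}))
   and the current x_n, output mu_n. *)
Definition strategy (X : Type) := list (X * R) -> X -> R.

Definition history {X : Type} (x : nat -> X) (y : nat -> R) (n : nat) : list (X * R) :=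
  map (fun i => (x i, y i)) (seq 1 (n - 1)).

Definition pred_move {X : Type} (S : strategy X) (x : nat -> X) (y : nat -> R) (n : nat) : R :=
  S (history x y n) (x n).

From Stdlib Require Import Reals List Lra Lia Classical ClassicalEpsilon Wf_nat.
Import ListNotations.
Open Scope R_scope.

(* Play in epochs: epoch [i] consists of the rounds [2^(4i) <= n < 2^(4i+4)].  During
   epoch [i] the points are binned by an [eps_i]-net with [eps_i = (b/i)^(1/gamma)],
   which by the entropy assumption has at most [2^i] points, and each bin runs online
   gradient descent on the square loss with step [1/(2 * 4^i)], restarted from 0.
   Against the comparator [clip (F z)] at the net point [z] of the bin, the usual
   potential [4^i * |v - u|^2 <= 4 * 8^i] gives a regret of [4 * 8^i] per epoch plus
   [4 / 4^i] per round, and Hoelder continuity adds [4 c eps_i^beta = 4 c (b/i)^(beta/gamma)]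
   per round.  Charging all rounds before epoch [J/2] ([J] the current epoch) as
   overhead, everything except the approximation term is [O(J 2^(3J))], i.e.
   [O(N^(3/4) log N)], while the approximation term is [O(c N / log^(beta/gamma) N)]
   because [i >= J/2] is of order [log N]. *)

Lemma rsum_minus (f g : nat -> R) (N : nat) :
  rsum (fun n => f n - g n) N = rsum f N - rsum g N.
Proof. induction N as [|N IH]; simpl; [ring | rewrite IH; ring]. Qed.

Lemma rsum_le_const (f : nat -> R) (a : R) (N : nat) :
  (forall t, (1 <= t)%nat -> f t <= a) -> rsum f N <= INR N * a.
Proof.
  intros Hf; induction N as [|N IH]; simpl rsum; [simpl; lra|].
  rewrite S_INR; specialize (Hf (S N) ltac:(lia)); lra.
Qed.

Lemma rsum_telescope (r V : nat -> R) (d : R) (m N : nat) : (m <= N)%nat ->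
  (forall t, (m < t <= N)%nat -> r t <= V t - V (S t) + d) ->
  rsum r N - rsum r m <= V (S m) - V (S N) + d * INR (N - m).
Proof.
  induction N as [|N IH]; intros HmN Hr.
  - replace m with 0%nat by lia; simpl; lra.
  - destruct (Nat.eq_dec m (S N)) as [->|Hne].
    + rewrite Nat.sub_diag; simpl INR; lra.
    + specialize (IH ltac:(lia) ltac:(intros; apply Hr; lia)).
      specialize (Hr (S N) ltac:(lia)).
      replace (S N - m)%nat with (S (N - m)) by lia.
      simpl rsum; rewrite S_INR; lra.
Qed.

Fixpoint sum_lt (f : nat -> R) (K : nat) : R :=
  match K with O => 0 | S k => sum_lt f k + f k end.

Lemma eq_sum_lt (f g : nat -> R) (K : nat) :
  (forall k, (k < K)%nat -> f k = g k) -> sum_lt f K = sum_lt g K.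
Proof.
  induction K as [|K IH]; intros Hfg; simpl; [reflexivity|].
  rewrite IH by (intros; apply Hfg; lia).
  rewrite Hfg by lia; reflexivity.
Qed.

Lemma sum_lt_update (f g : nat -> R) (c K : nat) : (c < K)%nat ->
  (forall k, k <> c -> f k = g k) -> sum_lt g K = sum_lt f K - f c + g c.
Proof.
  induction K as [|K IH]; intros Hc Hfg; [lia|]; simpl.
  destruct (Nat.eq_dec c K) as [->|Hne].
  - rewrite (eq_sum_lt g f) by (intros k Hk; symmetry; apply Hfg; lia); ring.
  - rewrite IH, (Hfg K) by (lia || assumption); ring.
Qed.

Lemma sum_lt_ge0 (f : nat -> R) (K : nat) : (forall k, 0 <= f k) -> 0 <= sum_lt f K.
Proof. intros Hf; induction K; simpl; [lra | specialize (Hf K); lra]. Qed.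

Lemma sum_lt_le_const (f : nat -> R) (a : R) (K : nat) :
  (forall k, f k <= a) -> sum_lt f K <= INR K * a.
Proof.
  intros Hf; induction K; simpl sum_lt; [simpl; lra|].
  rewrite S_INR; specialize (Hf K); lra.
Qed.

Definition clip (t : R) : R := Rmax (-1) (Rmin 1 t).

Lemma clip_bound (t : R) : -1 <= clip t <= 1.
Proof. unfold clip, Rmax, Rmin; repeat destruct Rle_dec; lra. Qed.

Lemma clip_lipschitz (a b : R) : Rabs (clip a - clip b) <= Rabs (a - b).
Proof.
  unfold clip, Rmax, Rmin; repeat destruct Rle_dec;
  unfold Rabs; repeat destruct Rcase_abs; lra.
Qed.

Lemma clip_sq_loss_le (w t : R) : -1 <= w <= 1 -> (w - clip t) ^ 2 <= (w - t) ^ 2.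
Proof. intros; unfold clip, Rmax, Rmin; repeat destruct Rle_dec; nra. Qed.

Lemma sq_le_4 (a : R) : -2 <= a <= 2 -> a ^ 2 <= 4.
Proof. intros; nra. Qed.

Lemma sq_loss_diff_le (w a b : R) : -1 <= w <= 1 -> -1 <= a <= 1 -> -1 <= b <= 1 ->
  (w - a) ^ 2 - (w - b) ^ 2 <= 4 * Rabs (b - a).
Proof.
  intros Hw Ha Hb.
  replace ((w - a) ^ 2 - (w - b) ^ 2) with ((b - a) * (2 * w - a - b)) by ring.
  unfold Rabs; destruct Rcase_abs; nra.
Qed.

Lemma clip_comparator_loss (w a b e : R) : -1 <= w <= 1 -> Rabs (a - b) <= e ->
  (w - clip b) ^ 2 - (w - a) ^ 2 <= 4 * e.
Proof.
  intros Hw Hab.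
  pose proof (clip_sq_loss_le w a Hw).
  pose proof (sq_loss_diff_le w (clip b) (clip a) Hw (clip_bound b) (clip_bound a)).
  pose proof (clip_lipschitz a b).
  lra.
Qed.

Lemma sgd_step_regret (P w u eta : R) : -1 <= P <= 1 -> -1 <= w <= 1 -> 0 < eta ->
  (w - P) ^ 2 - (w - u) ^ 2
  <= ((P - u) ^ 2 - (P - 2 * eta * (P - w) - u) ^ 2) / (2 * eta) + 8 * eta.
Proof.
  intros HP Hw Heta.
  replace (((P - u) ^ 2 - (P - 2 * eta * (P - w) - u) ^ 2) / (2 * eta))
    with (2 * (P - w) * (P - u) - 2 * eta * (P - w) ^ 2) by (field; lra).
  assert (Hsq : (P - w) ^ 2 <= 4) by (apply sq_le_4; lra).
  assert (eta * (P - w) ^ 2 <= eta * 4) by (apply Rmult_le_compat_l; lra).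
  assert (0 <= (P - u) ^ 2) by apply pow2_ge_0.
  nra.
Qed.

Lemma exp_INR_mult (k : nat) (z : R) : exp (INR k * z) = exp z ^ k.
Proof.
  induction k as [|k IH]; simpl pow; [rewrite Rmult_0_l; apply exp_0|].
  rewrite S_INR, Rmult_plus_distr_r, Rmult_1_l, exp_plus, IH; ring.
Qed.

Lemma pow2_exp (J : nat) : 2 ^ J = exp (INR J * ln 2).
Proof. rewrite exp_INR_mult, exp_ln by lra; reflexivity. Qed.

Lemma pow_div_le_exp (y : R) (k : nat) : 0 <= y -> (1 <= k)%nat -> (y / INR k) ^ k <= exp y.
Proof.
  intros Hy Hk.
  assert (Hk' : 0 < INR k) by (apply lt_0_INR; lia).
  assert (Hyk : 0 <= y / INR k)
    by (unfold Rdiv; apply Rmult_le_pos; [lra | left; apply Rinv_0_lt_compat; lra]).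
  replace y with (INR k * (y / INR k)) at 2 by (field; lra).
  rewrite exp_INR_mult; apply pow_incr; split; [exact Hyk|].
  pose proof (exp_ineq1_le (y / INR k)); lra.
Qed.

Lemma pow_le_pow2_eventually (m : nat) (A : R) : 0 < A ->
  exists J0 : nat, forall J : nat, (J0 <= J)%nat -> INR J ^ m <= A * 2 ^ J.
Proof.
  intros HA.
  set (kappa := ln 2 / INR (S m)).
  assert (Hln2 : 0 < ln 2) by (pose proof ln_lt_2; lra).
  assert (Hkappa : 0 < kappa ^ S m)
    by (apply pow_lt, Rdiv_lt_0_compat; [lra | apply lt_0_INR; lia]).
  destruct (INR_unbounded (/ (A * kappa ^ S m))) as [J0 HJ0].
  exists J0; intros J HJ.
  assert (HJ0J : INR J0 <= INR J) by (apply le_INR, HJ).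
  assert (HAk : 0 < A * kappa ^ S m) by (apply Rmult_lt_0_compat; lra).
  assert (Hinv : 0 < / (A * kappa ^ S m)) by (apply Rinv_0_lt_compat; lra).
  assert (Hone : 1 <= A * kappa ^ S m * INR J).
  { replace 1 with (A * kappa ^ S m * / (A * kappa ^ S m)) by (field; lra).
    apply Rmult_le_compat_l; lra. }
  assert (Hexp : (kappa * INR J) ^ S m <= 2 ^ J).
  { rewrite pow2_exp.
    replace (kappa * INR J) with (INR J * ln 2 / INR (S m))
      by (unfold kappa; field; apply not_0_INR; lia).
    apply pow_div_le_exp; [apply Rmult_le_pos; [apply pos_INR | lra] | lia]. }
  rewrite Rpow_mult_distr in Hexp.
  assert (HJm : 0 <= INR J ^ m) by (apply pow_le, pos_INR).
  apply Rle_trans with (A * kappa ^ S m * INR J * INR J ^ m); [nra|].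
  replace (A * kappa ^ S m * INR J * INR J ^ m) with (A * (kappa ^ S m * INR J ^ S m))
    by (simpl; ring).
  apply Rmult_le_compat_l; lra.
Qed.

Lemma overhead_le_pow2_eventually (m : nat) (A : R) : 0 < A ->
  exists J0 : nat, forall J : nat, (J0 <= J)%nat ->
    (32 * INR J + 200) * (4 * INR J + 4) ^ m <= A * 2 ^ J.
Proof.
  intros HA.
  assert (H8 : 0 < 400 * 8 ^ m) by (assert (0 < 8 ^ m) by (apply pow_lt; lra); lra).
  destruct (pow_le_pow2_eventually (S m) (A / (400 * 8 ^ m)))
    as [J0 HJ0]; [apply Rdiv_lt_0_compat; lra|].
  exists (S J0); intros J HJ.
  assert (HJ1 : 1 <= INR J) by (apply (le_INR 1); lia).
  specialize (HJ0 J ltac:(lia)).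
  apply Rle_trans with (400 * 8 ^ m * INR J ^ S m).
  - replace (400 * 8 ^ m * INR J ^ S m) with ((400 * INR J) * (8 * INR J) ^ m)
      by (rewrite Rpow_mult_distr; simpl; ring).
    apply Rmult_le_compat; [lra | apply pow_le; lra | lra | apply pow_incr; lra].
  - apply Rmult_le_compat_l with (r := 400 * 8 ^ m) in HJ0; [|lra].
    replace (400 * 8 ^ m * (A / (400 * 8 ^ m) * 2 ^ J)) with (A * 2 ^ J) in HJ0
      by (field; lra).
    exact HJ0.
Qed.

Lemma Rpower_div (x y z : R) : 0 < x -> 0 < y -> Rpower (x / y) z = Rpower x z / Rpower y z.
Proof.
  intros Hx Hy; unfold Rdiv.
  rewrite <- Rpower_mult_distr by (try apply Rinv_0_lt_compat; lra).
  f_equal; unfold Rpower; rewrite ln_Rinv by lra.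
  replace (z * - ln y) with (- (z * ln y)) by ring; apply exp_Ropp.
Qed.

Lemma Rpower_div_INR_antitone (b p : R) (i j : nat) : 0 < b -> 0 <= p -> (1 <= i <= j)%nat ->
  Rpower (b / INR j) p <= Rpower (b / INR i) p.
Proof.
  intros Hb Hp Hij.
  assert (Hi : 0 < INR i) by (apply lt_0_INR; lia).
  assert (INR i <= INR j) by (apply le_INR; lia).
  apply Rle_Rpower_l; [exact Hp|]; split; [apply Rdiv_lt_0_compat; lra|].
  apply Rmult_le_compat_l; [lra | apply Rinv_le_contravar; lra].
Qed.

Lemma Rpower_div_INR_le_ratio (b k p L : R) (i : nat) :
  0 < b -> 0 < k -> 0 <= p -> 0 < L <= k * INR i ->
  Rpower (b / INR i) p <= Rpower (k * b) p / Rpower L p.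
Proof.
  intros Hb Hk Hp HL.
  assert (Hi : 0 < INR i) by (apply (Rmult_lt_reg_l k); lra).
  rewrite <- Rpower_div by (try apply Rmult_lt_0_compat; lra).
  apply Rle_Rpower_l; [exact Hp|]; split; [apply Rdiv_lt_0_compat; lra|].
  unfold Rdiv; apply Rmult_le_reg_r with (INR i * L); [apply Rmult_lt_0_compat; lra|].
  replace (b * / INR i * (INR i * L)) with (b * L) by (field; lra).
  replace (k * b * / L * (INR i * L)) with (b * (k * INR i)) by (field; lra).
  apply Rmult_le_compat_l; lra.
Qed.

Lemma rpow_le_compat (a e p : R) : 0 <= a <= e -> 0 < p -> rpow a p <= rpow e p.
Proof.
  intros Ha Hp; unfold rpow.
  destruct (Rle_dec e 0); destruct (Rle_dec a 0); try lra.
  - left; apply exp_pos.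
  - apply Rle_Rpower_l; lra.
Qed.

Lemma log2_pos (t : R) : 1 < t -> 0 < log2 t.
Proof.
  intros Ht; unfold log2.
  apply Rdiv_lt_0_compat; [rewrite <- ln_1; apply ln_increasing | pose proof ln_lt_2]; lra.
Qed.

Lemma log2_le_of_lt_pow2 (t : R) (k : nat) : 0 < t -> t < 2 ^ k -> log2 t <= INR k.
Proof.
  intros Ht Htk; unfold log2.
  assert (Hln2 : 0 < ln 2) by (pose proof ln_lt_2; lra).
  apply Rmult_le_reg_r with (ln 2); [lra|].
  replace (ln t / ln 2 * ln 2) with (ln t) by (field; lra).
  rewrite <- (ln_exp (INR k * ln 2)), <- pow2_exp.
  left; apply ln_increasing; lra.
Qed.

Lemma le_pow2_of_log2_le (n i : nat) : log2 (INR n) <= INR i -> INR n <= 2 ^ i.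
Proof.
  intros Hlog.
  destruct n as [|n]; [simpl; apply pow_le; lra|].
  assert (Hn : 0 < INR (S n)) by (apply lt_0_INR; lia).
  assert (Hln2 : 0 < ln 2) by (pose proof ln_lt_2; lra).
  unfold log2 in Hlog.
  apply Rmult_le_compat_r with (r := ln 2) in Hlog; [|lra].
  replace (ln (INR (S n)) / ln 2 * ln 2) with (ln (INR (S n))) in Hlog by (field; lra).
  rewrite <- (exp_ln (INR (S n))), pow2_exp by exact Hn.
  destruct Hlog as [Hlt | ->]; [left; apply exp_increasing, Hlt | right; reflexivity].
Qed.

Definition epoch (n : nat) : nat := (Nat.log2 n / 4)%nat.

Lemma div_bounds (n d : nat) : d <> 0%nat -> (d * (n / d) <= n < d * (n / d) + d)%nat.
Proof.
  intros Hd; pose proof (Nat.div_mod n d Hd); pose proof (Nat.mod_upper_bound n d Hd); lia.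
Qed.

Lemma epoch_le (m n : nat) : (m <= n)%nat -> (epoch m <= epoch n)%nat.
Proof. intros H; apply Nat.Div0.div_le_mono, Nat.log2_le_mono, H. Qed.

Lemma epoch_pow2 (i : nat) : epoch (2 ^ (4 * i)) = i.
Proof. unfold epoch; rewrite Nat.log2_pow2, Nat.mul_comm, Nat.div_mul; lia. Qed.

Lemma epoch_bounds (n : nat) : (1 <= n)%nat -> (2 ^ (4 * epoch n) <= n < 2 ^ (4 * epoch n + 4))%nat.
Proof.
  intros Hn; pose proof (Nat.log2_spec n ltac:(lia)) as [H1 H2].
  pose proof (div_bounds (Nat.log2 n) 4 ltac:(lia)); unfold epoch; split.
  - eapply Nat.le_trans; [|exact H1]; apply Nat.pow_le_mono_r; lia.
  - eapply Nat.lt_le_trans; [exact H2|]; apply Nat.pow_le_mono_r; lia.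
Qed.

Lemma epoch_bounds_R (n : nat) : (1 <= n)%nat ->
  2 ^ (4 * epoch n) <= INR n < 16 * 2 ^ (4 * epoch n).
Proof.
  intros Hn; pose proof (epoch_bounds n Hn) as [Hlo Hhi].
  apply le_INR in Hlo; apply lt_INR in Hhi; rewrite pow_INR in Hlo, Hhi.
  rewrite pow_add in Hhi; replace (INR 2) with 2 in * by reflexivity.
  replace (2 ^ 4) with 16 in Hhi by ring; lra.
Qed.

Lemma half_epoch_start_le (n : nat) : (1 <= n)%nat ->
  (1 <= 2 ^ (4 * (epoch n / 2)) <= n)%nat.
Proof.
  intros Hn; pose proof (epoch_bounds n Hn) as [Hlo _]; split.
  - enough (2 ^ (4 * (epoch n / 2)) <> 0)%nat by lia; apply Nat.pow_nonzero; lia.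
  - eapply Nat.le_trans; [|exact Hlo]; apply Nat.pow_le_mono_r; [lia|].
    pose proof (div_bounds (epoch n) 2 ltac:(lia)); lia.
Qed.

Lemma epoch_succ_le (n : nat) : (epoch (S n) <= S (epoch n))%nat.
Proof.
  unfold epoch; pose proof (Nat.log2_succ_le n).
  pose proof (div_bounds (Nat.log2 n) 4 ltac:(lia)).
  pose proof (div_bounds (Nat.log2 (S n)) 4 ltac:(lia)).
  apply Nat.Div0.div_le_upper_bound; lia.
Qed.

Definition rate (i : nat) : R := / (2 * 4 ^ i).

Lemma rate_bounds (i : nat) : 0 < rate i <= 1 / 2.
Proof.
  unfold rate; assert (1 <= 4 ^ i) by (apply pow_R1_Rle; lra); split.
  - apply Rinv_0_lt_compat; lra.
  - rewrite <- Rinv_div; apply Rinv_le_contravar; lra.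
Qed.

Definition sgd_update (eta : R) (c : nat) (w : R) (v : nat -> R) : nat -> R :=
  fun k => if Nat.eqb k c then v k - 2 * eta * (v k - w) else v k.

Section EpochStrategy.

Variables (X : Type) (cell : nat -> X -> nat).

Fixpoint epoch_state (x : nat -> X) (y : nat -> R) (n : nat) : nat -> R :=
  match n with
  | S (S _ as m) =>
      if Nat.eqb (epoch n) (epoch m)
      then sgd_update (rate (epoch m)) (cell (epoch m) (x m)) (y m) (epoch_state x y m)
      else fun _ => 0
  | _ => fun _ => 0
  end.

Lemma epoch_state_succ (x : nat -> X) (y : nat -> R) (n : nat) : (1 <= n)%nat ->
  epoch_state x y (S n) =
  if Nat.eqb (epoch (S n)) (epoch n)
  then sgd_update (rate (epoch n)) (cell (epoch n) (x n)) (y n) (epoch_state x y n)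
  else fun _ => 0.
Proof. intros Hn; destruct n; [lia | reflexivity]. Qed.

Lemma epoch_state_ext (x x' : nat -> X) (y y' : nat -> R) (n : nat) :
  (forall i, (1 <= i < n)%nat -> x i = x' i /\ y i = y' i) ->
  epoch_state x y n = epoch_state x' y' n.
Proof.
  induction n as [|n IH]; intros Hxy; [reflexivity|].
  destruct n as [|m]; [reflexivity|].
  rewrite !(epoch_state_succ _ _ (S m)), IH by (intros; try apply Hxy; lia).
  destruct (Hxy (S m) ltac:(lia)) as [-> ->]; reflexivity.
Qed.

Lemma epoch_state_bound (x : nat -> X) (y : nat -> R) : (forall n, -1 <= y n <= 1) ->
  forall n k, -1 <= epoch_state x y n k <= 1.
Proof.
  intros Hy n; induction n as [|n IH]; intros k; [simpl; lra|].
  destruct n as [|m]; [simpl; lra|].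
  rewrite epoch_state_succ by lia.
  destruct Nat.eqb; [|lra].
  unfold sgd_update; destruct Nat.eqb; [|apply IH].
  specialize (IH k); specialize (Hy (S m)); pose proof (rate_bounds (epoch (S m))).
  replace (epoch_state x y (S m) k - 2 * rate (epoch (S m)) * (epoch_state x y (S m) k - y (S m)))
    with ((1 - 2 * rate (epoch (S m))) * epoch_state x y (S m) k
          + 2 * rate (epoch (S m)) * y (S m)) by ring.
  split; nra.
Qed.

Definition epoch_prediction (x : nat -> X) (y : nat -> R) (n : nat) : R :=
  epoch_state x y n (cell (epoch n) (x n)).

(* Round [i] of the history is stored at position [i - 1]; the current point [x_n]
   is the default value, so it is what the reconstructed [x] returns at [n]. *)
Definition epoch_strategy : strategy X :=
  fun h xn =>
    epoch_prediction (fun i => fst (nth (pred i) h (xn, 0)))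
      (fun i => snd (nth (pred i) h (xn, 0))) (S (length h)).

Lemma nth_history (x : nat -> X) (y : nat -> R) (n i : nat) (d : X * R) :
  (1 <= i < n)%nat -> nth (pred i) (history x y n) d = (x i, y i).
Proof.
  intros Hi; unfold history.
  rewrite nth_indep with (d' := (x 0%nat, y 0%nat))
    by (rewrite length_map, length_seq; lia).
  rewrite (map_nth (fun j => (x j, y j))), seq_nth by lia.
  f_equal; f_equal; lia.
Qed.

Lemma pred_move_epoch_strategy (x : nat -> X) (y : nat -> R) (n : nat) : (1 <= n)%nat ->
  pred_move epoch_strategy x y n = epoch_prediction x y n.
Proof.
  intros Hn; unfold pred_move, epoch_strategy.
  assert (Hlen : length (history x y n) = pred n)
    by (unfold history; rewrite length_map, length_seq; lia).
  replace (S (length (history x y n))) with n by lia.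
  unfold epoch_prediction.
  rewrite nth_overflow by lia; cbn [fst].
  rewrite (epoch_state_ext _ x _ y); [reflexivity|].
  intros i Hi; rewrite !nth_history by lia; auto.
Qed.

End EpochStrategy.

Section EpochRegret.

Variables (X : Type) (cell : nat -> X -> nat) (size : nat -> nat) (u : nat -> nat -> R)
  (i0 : nat) (x : nat -> X) (y : nat -> R).
Hypothesis y_bound : forall n, -1 <= y n <= 1.
Hypothesis u_bound : forall i k, -1 <= u i k <= 1.
Hypothesis cell_lt_size : forall i z, (i0 <= i)%nat -> (cell i z < size i)%nat.
Hypothesis size_le : forall i, (i0 <= i)%nat -> INR (size i) <= 2 ^ i.

(* [|v - u_i|^2 / (2 * rate i)], the standard potential of gradient descent. *)
Definition potential (i : nat) (v : nat -> R) : R :=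
  sum_lt (fun k => (v k - u i k) ^ 2) (size i) * 4 ^ i.

Lemma potential_ge0 (i : nat) (v : nat -> R) : 0 <= potential i v.
Proof.
  apply Rmult_le_pos; [apply sum_lt_ge0; intros; apply pow2_ge_0 | apply pow_le; lra].
Qed.

Lemma potential_le (i : nat) (v : nat -> R) : (i0 <= i)%nat ->
  (forall k, -1 <= v k <= 1) -> potential i v <= 4 * 8 ^ i.
Proof.
  intros Hi Hv; unfold potential.
  assert (Hsum : sum_lt (fun k => (v k - u i k) ^ 2) (size i) <= INR (size i) * 4).
  { apply sum_lt_le_const; intros k.
    specialize (Hv k); specialize (u_bound i k); apply sq_le_4; lra. }
  assert (H4 : 0 < 4 ^ i) by (apply pow_lt; lra).
  replace (4 * 8 ^ i) with (2 ^ i * 4 * 4 ^ i)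
    by (replace 8 with (2 * 4) by lra; rewrite Rpow_mult_distr; ring).
  apply Rmult_le_compat_r; [lra|].
  pose proof (size_le i Hi); lra.
Qed.

Lemma potential_sgd_update (i k : nat) (v : nat -> R) (w : R) : (k < size i)%nat ->
  -1 <= v k <= 1 -> -1 <= w <= 1 ->
  (w - v k) ^ 2 - (w - u i k) ^ 2
  <= potential i v - potential i (sgd_update (rate i) k w v) + 4 / 4 ^ i.
Proof.
  intros Hk Hv Hw; unfold potential.
  rewrite (sum_lt_update (fun j => (v j - u i j) ^ 2)
             (fun j => (sgd_update (rate i) k w v j - u i j) ^ 2) k) by
    (try exact Hk; intros j Hj; unfold sgd_update;
     rewrite (proj2 (Nat.eqb_neq j k) Hj); reflexivity).
  unfold sgd_update; rewrite Nat.eqb_refl.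
  pose proof (rate_bounds i) as [Hr _].
  pose proof (sgd_step_regret (v k) w (u i k) (rate i) Hv Hw Hr) as Hstep.
  unfold Rdiv at 1 in Hstep.
  assert (H4 : 0 < 4 ^ i) by (apply pow_lt; lra).
  replace (/ (2 * rate i)) with (4 ^ i) in Hstep by (unfold rate; field; lra).
  replace (8 * rate i) with (4 / 4 ^ i) in Hstep by (unfold rate; field; lra).
  lra.
Qed.

(* The term [- 4 * 8 ^ J * epoch t] pays for the potential of the fresh state at
   each restart, since no potential up to epoch [J] exceeds [4 * 8 ^ J]. *)
Definition lyapunov (J t : nat) : R :=
  potential (epoch t) (epoch_state X cell x y t) - 4 * 8 ^ J * INR (epoch t).

Lemma cell_regret_le (J t : nat) :
  (1 <= t)%nat -> (i0 <= epoch t)%nat -> (epoch (S t) <= J)%nat ->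
  (y t - pred_move (epoch_strategy X cell) x y t) ^ 2
  - (y t - u (epoch t) (cell (epoch t) (x t))) ^ 2
  <= lyapunov J t - lyapunov J (S t) + 4 / 4 ^ epoch t.
Proof.
  intros Ht Hi HJ.
  rewrite pred_move_epoch_strategy by exact Ht; unfold epoch_prediction, lyapunov.
  set (i := epoch t) in *; set (v := epoch_state X cell x y t).
  set (k := cell i (x t)).
  pose proof (epoch_state_bound X cell x y y_bound) as Hst.
  pose proof (potential_sgd_update i k v (y t) (cell_lt_size i (x t) Hi) (Hst t k) (y_bound t))
    as Hstep.
  rewrite epoch_state_succ by exact Ht; fold i v k.
  destruct (Nat.eqb (epoch (S t)) i) eqn:Hsame.
  - apply Nat.eqb_eq in Hsame; rewrite Hsame; fold k; lra.
  - apply Nat.eqb_neq in Hsame.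
    assert (Hnext : (S i <= epoch (S t))%nat)
      by (assert (i <= epoch (S t))%nat by (apply epoch_le; lia); lia).
    assert (HZ : potential (epoch (S t)) (fun _ => 0) <= 4 * 8 ^ J).
    { apply Rle_trans with (4 * 8 ^ epoch (S t)).
      - apply potential_le; [lia | intros; lra].
      - apply Rmult_le_compat_l; [lra | apply Rle_pow; [lra | exact HJ]]. }
    apply le_INR in Hnext; rewrite S_INR in Hnext.
    assert (0 <= 8 ^ J) by (apply pow_le; lra).
    pose proof (potential_ge0 i (sgd_update (rate i) k (y t) v)).
    nra.
Qed.

Lemma prediction_sq_loss_le (t : nat) : (1 <= t)%nat ->
  (y t - pred_move (epoch_strategy X cell) x y t) ^ 2 <= 4.
Proof.
  intros Ht; rewrite pred_move_epoch_strategy by exact Ht; unfold epoch_prediction.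
  pose proof (epoch_state_bound X cell x y y_bound t (cell (epoch t) (x t))).
  pose proof (y_bound t); apply sq_le_4; lra.
Qed.

Lemma lyapunov_le (J t : nat) : (i0 <= epoch t)%nat -> (epoch t <= J)%nat ->
  lyapunov J t <= 4 * 8 ^ J.
Proof.
  intros Hi HJ; unfold lyapunov.
  pose proof (potential_le (epoch t) (epoch_state X cell x y t) Hi
                (epoch_state_bound X cell x y y_bound t)).
  assert (4 * 8 ^ epoch t <= 4 * 8 ^ J)
    by (apply Rmult_le_compat_l; [lra | apply Rle_pow; [lra | exact HJ]]).
  assert (0 <= 4 * 8 ^ J * INR (epoch t))
    by (apply Rmult_le_pos; [assert (0 < 8 ^ J) by (apply pow_lt; lra); lra | apply pos_INR]).
  lra.
Qed.

Lemma lyapunov_ge (J t : nat) : - 4 * 8 ^ J * INR (epoch t) <= lyapunov J t.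
Proof. unfold lyapunov; pose proof (potential_ge0 (epoch t) (epoch_state X cell x y t)); lra. Qed.

Lemma epoch_regret_le (F : X -> R) (e : R) (m N : nat) :
  (1 <= m <= N)%nat -> (i0 <= epoch m)%nat -> 0 <= e ->
  (forall t, (m <= t <= N)%nat ->
     (y t - u (epoch t) (cell (epoch t) (x t))) ^ 2 - (y t - F (x t)) ^ 2 <= e) ->
  rsum (fun n => (y n - pred_move (epoch_strategy X cell) x y n) ^ 2 - (y n - F (x n)) ^ 2) N
  <= 4 * INR m + 4 * 8 ^ epoch (S N) * (INR (epoch (S N)) + 1) + (4 / 4 ^ epoch m + e) * INR N.
Proof.
  intros HmN Him He Happrox.
  set (J := epoch (S N)).
  set (r := fun n => (y n - pred_move (epoch_strategy X cell) x y n) ^ 2 - (y n - F (x n)) ^ 2).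
  assert (H4m : 0 < 4 ^ epoch m) by (apply pow_lt; lra).
  assert (Hd : 0 <= 4 / 4 ^ epoch m + e) by (assert (0 < 4 / 4 ^ epoch m) by
    (apply Rdiv_lt_0_compat; lra); lra).
  assert (Hround : forall t, (m - 1 < t <= N)%nat ->
            r t <= lyapunov J t - lyapunov J (S t) + (4 / 4 ^ epoch m + e)).
  { intros t Ht.
    assert (Hmt : (epoch m <= epoch t)%nat) by (apply epoch_le; lia).
    pose proof (cell_regret_le J t ltac:(lia) ltac:(lia) ltac:(apply epoch_le; lia)).
    pose proof (Happrox t ltac:(lia)).
    assert (4 / 4 ^ epoch t <= 4 / 4 ^ epoch m).
    { apply Rmult_le_compat_l; [lra|].
      apply Rinv_le_contravar; [lra | apply Rle_pow; [lra | exact Hmt]]. }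
    unfold r; lra. }
  pose proof (rsum_telescope r (lyapunov J) _ (m - 1) N ltac:(lia) Hround) as Htele.
  replace (S (m - 1)) with m in Htele by lia.
  assert (Hearly : rsum r (m - 1) <= INR (m - 1) * 4).
  { apply rsum_le_const; intros t Ht; unfold r.
    pose proof (prediction_sq_loss_le t Ht); pose proof (pow2_ge_0 (y t - F (x t))); lra. }
  pose proof (lyapunov_le J m Him ltac:(apply epoch_le; lia)) as HVm.
  pose proof (lyapunov_ge J (S N)) as HVN; fold J in HVN.
  assert (INR (m - 1) <= INR m) by (apply le_INR; lia).
  assert (INR (N - (m - 1)) <= INR N) by (apply le_INR; lia).
  assert ((4 / 4 ^ epoch m + e) * INR (N - (m - 1)) <= (4 / 4 ^ epoch m + e) * INR N)
    by (apply Rmult_le_compat_l; lra).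
  fold r; lra.
Qed.

End EpochRegret.

Fixpoint first_close {X : Type} (rho : X -> X -> R) (e : R) (l : list X) (z : X) : nat :=
  match l with
  | [] => O
  | w :: l' => if Rle_dec (rho z w) e then O else S (first_close rho e l' z)
  end.

Lemma first_close_spec {X : Type} (rho : X -> X -> R) (e : R) (l : list X) (z d : X) :
  (exists w, In w l /\ rho z w <= e) ->
  (first_close rho e l z < length l)%nat /\ rho z (nth (first_close rho e l z) l d) <= e.
Proof.
  induction l as [|w l IH]; intros [w' [Hin Hw']]; [destruct Hin|]; simpl.
  destruct (Rle_dec (rho z w) e) as [Hw|Hw]; [split; [lia | exact Hw]|].
  destruct Hin as [->|Hin]; [contradiction|].
  destruct IH as [H1 H2]; [exists w'; auto | split; [lia | exact H2]].
Qed.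

Definition net_radius (gamma b : R) (i : nat) : R := Rpower (b / INR i) (/ gamma).

Lemma net_radius_pos (gamma b : R) (i : nat) : 0 < net_radius gamma b i.
Proof. apply exp_pos. Qed.

Lemma rpow_net_radius (gamma b beta : R) (i : nat) :
  rpow (net_radius gamma b i) beta = Rpower (b / INR i) (beta / gamma).
Proof.
  unfold rpow; destruct (Rle_dec _ 0) as [H|_]; [pose proof (net_radius_pos gamma b i); lra|].
  unfold net_radius; rewrite Rpower_mult; f_equal; unfold Rdiv; ring.
Qed.

Lemma net_radius_lt (gamma b eps0 : R) (i : nat) : 0 < gamma -> 0 < b -> 0 < eps0 ->
  b / Rpower eps0 gamma < INR i -> net_radius gamma b i < eps0.
Proof.
  intros Hgamma Hb Heps0 Hi.
  assert (Hpe : 0 < Rpower eps0 gamma) by apply exp_pos.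
  assert (Hipos : 0 < INR i) by (enough (0 < b / Rpower eps0 gamma) by lra;
                                 apply Rdiv_lt_0_compat; lra).
  unfold net_radius.
  replace eps0 with (Rpower (Rpower eps0 gamma) (/ gamma))
    by (rewrite Rpower_mult, Rinv_r, Rpower_1 by (lra || apply Rgt_not_eq; lra); reflexivity).
  apply Rlt_Rpower_l; [apply Rinv_0_lt_compat; lra|]; split; [apply Rdiv_lt_0_compat; lra|].
  apply Rmult_lt_reg_r with (INR i / Rpower eps0 gamma); [apply Rdiv_lt_0_compat; lra|].
  replace (b / INR i * (INR i / Rpower eps0 gamma)) with (b / Rpower eps0 gamma)
    by (field; lra).
  replace (Rpower eps0 gamma * (INR i / Rpower eps0 gamma)) with (INR i) by (field; lra).
  exact Hi.
Qed.

Lemma rpow_inv_net_radius (gamma b : R) (i : nat) : 0 < gamma -> 0 < b -> 0 < INR i ->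
  rpow (1 / net_radius gamma b i) gamma = INR i / b.
Proof.
  intros Hgamma Hb Hi; pose proof (net_radius_pos gamma b i) as Hr.
  unfold rpow; destruct (Rle_dec _ 0) as [H|_];
    [assert (0 < 1 / net_radius gamma b i) by (apply Rdiv_lt_0_compat; lra); lra|].
  rewrite Rpower_div by lra.
  unfold Rpower at 1; rewrite ln_1, Rmult_0_r, exp_0.
  unfold net_radius; rewrite Rpower_mult.
  replace (/ gamma * gamma) with 1 by (field; lra).
  rewrite Rpower_1 by (apply Rdiv_lt_0_compat; lra); field; lra.
Qed.

Definition net_strategy {X : Type} (rho : X -> X -> R) (gamma b : R) (net : nat -> list X)
  : strategy X :=
  epoch_strategy X (fun i => first_close rho (net_radius gamma b i) (net i)).

Lemma min_net_size_exists {X : Type} (rho : X -> X -> R) (eps : R) :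
  (exists net, is_eps_net rho eps net) -> exists n, is_min_net_size rho eps n.
Proof.
  intros [net Hnet].
  destruct (dec_inh_nat_subset_has_unique_least_element
              (fun n => exists net, length net = n /\ is_eps_net rho eps net))
    as [n [[Hn Hmin] _]]; [intros n; apply classic | exists (length net), net; auto|].
  exists n; split; [exact Hn|].
  intros net' Hnet'; apply Hmin; exists net'; auto.
Qed.

Lemma entropy_asymp_nets {X : Type} (rho : X -> X -> R) (gamma : R) :
  totally_bounded rho -> 0 < gamma -> entropy_asymp rho gamma ->
  exists (b : R) (i0 : nat) (net : nat -> list X), 0 < b /\ (1 <= i0)%nat /\
    forall i, (i0 <= i)%nat ->
      is_eps_net rho (net_radius gamma b i) (net i) /\ INR (length (net i)) <= 2 ^ i.
Proof.
  intros Htb Hgamma (a & b & eps0 & _ & Hb & Heps0 & Hent).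
  destruct (INR_unbounded (b / Rpower eps0 gamma)) as [i0 Hi0].
  assert (Hnets : forall i, exists net : list X, (S i0 <= i)%nat ->
            is_eps_net rho (net_radius gamma b i) net /\ INR (length net) <= 2 ^ i).
  { intros i; destruct (Compare_dec.le_dec (S i0) i) as [Hi|Hi]; [|exists nil; lia].
    assert (HiR : INR i0 < INR i) by (apply lt_INR; lia).
    assert (Hipos : 0 < INR i) by (pose proof (pos_INR i0); lra).
    pose proof (net_radius_lt gamma b eps0 i Hgamma Hb Heps0 ltac:(lra)) as Hsmall.
    pose proof (net_radius_pos gamma b i) as Hr.
    destruct (min_net_size_exists rho _ (Htb _ Hr)) as [n Hmin].
    destruct (Hent (net_radius gamma b i) n ltac:(lra) Hmin) as [_ Hup].
    rewrite rpow_inv_net_radius in Hup by lra.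
    replace (b * (INR i / b)) with (INR i) in Hup by (field; lra).
    destruct Hmin as [[net [Hlen Hnet]] _].
    exists net; intros _; split; [exact Hnet | rewrite Hlen; apply le_pow2_of_log2_le, Hup]. }
  destruct (choice _ Hnets) as [net Hnet].
  exists b, (S i0), net; split; [exact Hb | split; [lia | intros i Hi; apply Hnet, Hi]].
Qed.

Lemma net_comparator_loss {X : Type} (rho : X -> X -> R) (gamma beta b c : R) (i : nat)
  (l : list X) (F : X -> R) (z d : X) (w : R) :
  (forall z z', 0 <= rho z z') -> 0 < beta -> 0 <= c -> -1 <= w <= 1 ->
  is_eps_net rho (net_radius gamma b i) l -> holder rho beta c F ->
  (w - clip (F (nth (first_close rho (net_radius gamma b i) l z) l d))) ^ 2 - (w - F z) ^ 2
  <= 4 * c * Rpower (b / INR i) (beta / gamma).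
Proof.
  intros Hrho Hbeta Hc Hw Hnet HF.
  destruct (first_close_spec rho (net_radius gamma b i) l z d (Hnet z)) as [_ Hclose].
  set (z' := nth _ l d) in *.
  assert (Hdist : rpow (rho z z') beta <= rpow (net_radius gamma b i) beta)
    by (apply rpow_le_compat; [split; [apply Hrho | exact Hclose] | exact Hbeta]).
  rewrite rpow_net_radius in Hdist.
  rewrite Rmult_assoc; apply clip_comparator_loss; [exact Hw|].
  apply Rle_trans with (c * rpow (rho z z') beta); [apply HF | apply Rmult_le_compat_l; lra].
Qed.

Lemma net_strategy_regret {X : Type} (rho : X -> X -> R) (gamma beta b c : R) (i0 : nat)
  (net : nat -> list X) (F : X -> R) (x : nat -> X) (y : nat -> R) (N : nat) :
  (forall z z', 0 <= rho z z') -> 0 < gamma -> 0 < beta -> 0 < b -> 0 <= c ->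
  (forall i, (i0 <= i)%nat ->
     is_eps_net rho (net_radius gamma b i) (net i) /\ INR (length (net i)) <= 2 ^ i) ->
  holder rho beta c F -> (forall n, -1 <= y n <= 1) ->
  (1 <= i0 <= epoch N / 2)%nat ->
  rsum (fun n => (y n - pred_move (net_strategy rho gamma b net) x y n) ^ 2
                 - (y n - F (x n)) ^ 2) N
  <= 4 * 2 ^ (4 * (epoch N / 2)) + 4 * 8 ^ S (epoch N) * (INR (epoch N) + 2)
     + (4 / 4 ^ (epoch N / 2) + 4 * c * Rpower (b / INR (epoch N / 2)) (beta / gamma))
       * INR N.
Proof.
  intros Hrho Hgamma Hbeta Hb Hc Hnet HF Hy Hi0.
  assert (HN : (1 <= N)%nat) by (destruct N; [cbn in Hi0; lia | lia]).
  set (J := epoch N) in *; set (i1 := (J / 2)%nat) in *.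
  set (m := (2 ^ (4 * i1))%nat).
  assert (Hm : epoch m = i1) by apply epoch_pow2.
  pose proof (half_epoch_start_le N HN) as HmN; fold J i1 m in HmN.
  set (e := 4 * c * Rpower (b / INR i1) (beta / gamma)).
  assert (He : 0 <= e) by (apply Rmult_le_pos; [lra | left; apply exp_pos]).
  pose proof (epoch_regret_le X (fun i => first_close rho (net_radius gamma b i) (net i))
    (fun i => length (net i)) (fun i k => clip (F (nth k (net i) (x 0%nat)))) i0 x y Hy
    (fun i k => clip_bound _)
    (fun i z Hi => proj1 (first_close_spec _ _ _ z (x 0%nat) (proj1 (Hnet i Hi) z)))
    (fun i Hi => proj2 (Hnet i Hi)) F e m N HmN ltac:(lia) He) as Hregret.
  assert (HmR : INR m = 2 ^ (4 * i1)) by (unfold m; rewrite pow_INR; reflexivity).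
  unfold net_strategy; rewrite Hm, HmR in Hregret.
  assert (HJS : (epoch (S N) <= S J)%nat) by apply epoch_succ_le.
  assert (Hgrowth : 8 ^ epoch (S N) * (INR (epoch (S N)) + 1) <= 8 ^ S J * (INR J + 2)).
  { apply Rmult_le_compat; [apply pow_le; lra | pose proof (pos_INR (epoch (S N))); lra
      | apply Rle_pow; [lra | exact HJS] | apply le_INR in HJS; rewrite S_INR in HJS; lra]. }
  enough (Happrox : forall t, (m <= t <= N)%nat ->
    (y t - clip (F (nth (first_close rho (net_radius gamma b (epoch t)) (net (epoch t)) (x t))
                    (net (epoch t)) (x 0%nat)))) ^ 2 - (y t - F (x t)) ^ 2 <= e)
    by (specialize (Hregret Happrox); lra).
  intros t Ht.
  assert (Hit : (i1 <= epoch t)%nat) by (rewrite <- Hm; apply epoch_le; lia).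
  apply Rle_trans with (4 * c * Rpower (b / INR (epoch t)) (beta / gamma)).
  - apply net_comparator_loss; try assumption; [apply Hy | apply Hnet; lia].
  - apply Rmult_le_compat_l; [lra|].
    apply Rpower_div_INR_antitone; [lra | apply Rlt_le, Rdiv_lt_0_compat; lra | lia].
Qed.

Lemma overhead_le (i1 J : nat) (N : R) : (2 * i1 <= J <= 2 * i1 + 1)%nat ->
  N <= 16 * 2 ^ (4 * J) ->
  4 * 2 ^ (4 * i1) + 4 * 8 ^ S J * (INR J + 2) + 4 / 4 ^ i1 * N
  <= 2 ^ (3 * J) * (32 * INR J + 200).
Proof.
  intros Hi1 HN.
  assert (Hpow : forall k n, 2 ^ (k * n) = (2 ^ n) ^ k)
    by (intros; rewrite Nat.mul_comm, pow_mult; reflexivity).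
  replace (8 ^ S J) with (8 * 2 ^ (3 * J))
    by (rewrite pow_mult; replace (2 ^ 3) with 8 by ring; reflexivity).
  replace (4 ^ i1) with ((2 ^ i1) ^ 2)
    by (rewrite <- pow_mult, Nat.mul_comm, pow_mult; replace (2 ^ 2) with 4 by ring;
        reflexivity).
  rewrite !Hpow in *.
  set (q := 2 ^ J) in *; set (s := 2 ^ i1) in *.
  assert (Hs : 1 <= s) by (apply pow_R1_Rle; lra).
  assert (Hsq : s ^ 2 <= q <= 2 * s ^ 2).
  { unfold s, q; rewrite <- !pow_mult; split; [apply Rle_pow; [lra | lia]|].
    replace (2 * 2 ^ (i1 * 2)) with (2 ^ S (i1 * 2)) by reflexivity.
    apply Rle_pow; [lra | lia]. }
  assert (Hs2 : 0 < s ^ 2) by (apply pow_lt; lra).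
  assert (Hq3 : 0 <= q ^ 3) by (apply pow_le; lra).
  assert (HsN : 4 / s ^ 2 * N <= 128 * q ^ 3).
  { apply Rle_trans with (4 / s ^ 2 * (16 * q ^ 4)).
    - apply Rmult_le_compat_l; [apply Rlt_le, Rdiv_lt_0_compat|]; lra.
    - replace (4 / s ^ 2 * (16 * q ^ 4)) with (64 * q ^ 3 * (q / s ^ 2)) by (field; lra).
      assert (q / s ^ 2 <= 2) by (apply Rmult_le_reg_r with (s ^ 2); [lra|];
        unfold Rdiv; rewrite Rmult_assoc, Rinv_l; lra).
      nra. }
  assert (Hs4 : s ^ 4 <= q ^ 3).
  { replace (s ^ 4) with (s ^ 2 * s ^ 2) by ring.
    apply Rle_trans with (q * q); [apply Rmult_le_compat; lra|].
    replace (q ^ 3) with (q * q * q) by ring.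
    rewrite <- (Rmult_1_r (q * q)) at 1; apply Rmult_le_compat_l; nra. }
  pose proof (pos_INR J); nra.
Qed.

Lemma log2_range (J : nat) (N : R) : (1 <= J)%nat -> 2 ^ (4 * J) <= N < 16 * 2 ^ (4 * J) ->
  0 < log2 N <= 4 * INR J + 4.
Proof.
  intros HJ HN; split.
  - apply log2_pos; enough (2 <= 2 ^ (4 * J)) by lra.
    replace 2 with (2 ^ 1) at 1 by ring; apply Rle_pow; [lra | lia].
  - replace (4 * INR J + 4) with (INR (4 * J + 4)) by (rewrite plus_INR, mult_INR; simpl; ring).
    apply log2_le_of_lt_pow2; [pose proof (pow_lt 2 (4 * J)); lra|].
    rewrite pow_add; replace (2 ^ 4) with 16 by ring; lra.
Qed.

Lemma regret_rate (b c p : R) (mp i1 J : nat) (N : R) :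
  0 < b -> 0 < c -> 0 < p <= INR mp -> (1 <= i1)%nat -> (2 * i1 <= J <= 2 * i1 + 1)%nat ->
  2 ^ (4 * J) <= N < 16 * 2 ^ (4 * J) ->
  (32 * INR J + 200) * (4 * INR J + 4) ^ mp <= 4 * c * Rpower (32 * b) p * 2 ^ J ->
  4 * 2 ^ (4 * i1) + 4 * 8 ^ S J * (INR J + 2)
  + (4 / 4 ^ i1 + 4 * c * Rpower (b / INR i1) p) * N
  <= 8 * Rpower (32 * b) p * c * (N / rpow (log2 N) p).
Proof.
  intros Hb Hc Hp Hi1 HJ HN Hpoly.
  set (K := Rpower (32 * b) p) in *.
  assert (HK : 0 < K) by apply exp_pos.
  set (L := log2 N).
  destruct (log2_range J N ltac:(lia) HN) as [HL HLJ]; fold L in HL, HLJ.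
  set (Lp := Rpower L p).
  assert (HLp : 0 < Lp) by apply exp_pos.
  replace (rpow L p) with Lp by (unfold rpow; destruct Rle_dec; [lra | reflexivity]).
  assert (HLpJ : Lp <= (4 * INR J + 4) ^ mp).
  { pose proof (pos_INR J).
    apply Rle_trans with (Rpower (4 * INR J + 4) p); [apply Rle_Rpower_l; lra|].
    rewrite <- Rpower_pow by lra; apply Rle_Rpower; lra. }
  assert (Hoverhead : 2 ^ (3 * J) * (32 * INR J + 200) * Lp <= 4 * c * K * N).
  { assert (H3J : 0 <= 2 ^ (3 * J)) by (apply pow_le; lra).
    assert (HJpos : 0 <= 32 * INR J + 200) by (pose proof (pos_INR J); lra).
    apply Rle_trans with (2 ^ (3 * J) * (4 * c * K * 2 ^ J)).
    - rewrite Rmult_assoc; apply Rmult_le_compat_l; [exact H3J|].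
      apply Rle_trans with ((32 * INR J + 200) * (4 * INR J + 4) ^ mp); [|exact Hpoly].
      apply Rmult_le_compat_l; lra.
    - replace (2 ^ (3 * J) * (4 * c * K * 2 ^ J)) with (4 * c * K * 2 ^ (4 * J))
        by (replace (4 * J)%nat with (3 * J + J)%nat by lia; rewrite pow_add; ring).
      apply Rmult_le_compat_l; [apply Rmult_le_pos; lra | lra]. }
  assert (Happrox : Rpower (b / INR i1) p <= K / Lp).
  { assert (INR J <= 2 * INR i1 + 1)
      by (replace (2 * INR i1 + 1) with (INR (2 * i1 + 1))
            by (rewrite plus_INR, mult_INR; simpl; ring); apply le_INR; lia).
    assert (1 <= INR i1) by (apply (le_INR 1), Hi1).
    apply Rpower_div_INR_le_ratio; lra. }
  pose proof (overhead_le i1 J N HJ ltac:(lra)) as Hsmall.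
  assert (Hbig : 2 ^ (3 * J) * (32 * INR J + 200) <= 4 * c * K * N / Lp)
    by (apply Rmult_le_reg_r with Lp; [exact HLp|];
        replace (4 * c * K * N / Lp * Lp) with (4 * c * K * N) by (field; lra); lra).
  assert (Hcover : 4 * c * Rpower (b / INR i1) p * N <= 4 * c * N * (K / Lp))
    by (replace (4 * c * Rpower (b / INR i1) p * N) with (4 * c * N * Rpower (b / INR i1) p)
          by ring; apply Rmult_le_compat_l; [apply Rmult_le_pos; lra | exact Happrox]).
  replace (8 * K * c * (N / Lp)) with (4 * c * K * N / Lp + 4 * c * N * (K / Lp))
    by (field; lra).
  lra.
Qed.

Theorem corollary9 (X : Type) (rho : X -> X -> R) (gamma : R) :
  is_metric rho -> totally_bounded rho -> 0 < gamma -> entropy_asymp rho gamma ->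
  forall beta : R, 0 < beta <= 1 ->
  exists C : R,
  forall c B : R, 0 < c -> 0 < B ->
  exists S : strategy X,
  forall F : X -> R,
    (forall t, Rabs (F t) <= B) -> holder rho beta c F ->
  exists N0 : nat, forall N : nat, (N0 <= N)%nat ->
  forall (x : nat -> X) (y : nat -> R),
    (forall n, -1 <= y n <= 1) ->
    rsum (fun n => (y n - pred_move S x y n) ^ 2) N
    <= rsum (fun n => (y n - F (x n)) ^ 2) N
       + C * c * (INR N / rpow (log2 (INR N)) (beta / gamma)).
Proof.
  intros [Hrho _] Htb Hgamma Hent beta Hbeta.
  destruct (entropy_asymp_nets rho gamma Htb Hgamma Hent) as (b & i0 & net & Hb & Hi0 & Hnet).
  exists (8 * Rpower (32 * b) (beta / gamma)); intros c B Hc _.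
  exists (net_strategy rho gamma b net); intros F _ HF.
  destruct (INR_unbounded (beta / gamma)) as [mp Hmp].
  destruct (overhead_le_pow2_eventually mp (4 * c * Rpower (32 * b) (beta / gamma)))
    as [J0 HJ0]; [apply Rmult_lt_0_compat; [lra | apply exp_pos]|].
  exists (2 ^ (4 * (J0 + 2 * i0)))%nat; intros N HN x y Hy.
  assert (HN1 : (1 <= N)%nat) by (enough (2 ^ (4 * (J0 + 2 * i0)) <> 0)%nat by lia;
                                  apply Nat.pow_nonzero; lia).
  assert (HJ : (J0 + 2 * i0 <= epoch N)%nat)
    by (rewrite <- (epoch_pow2 (J0 + 2 * i0)); apply epoch_le, HN).
  pose proof (div_bounds (epoch N) 2 ltac:(lia)) as Hhalf.
  pose proof (net_strategy_regret rho gamma beta b c i0 net F x y N Hrho Hgamma (proj1 Hbeta)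
                Hb (Rlt_le _ _ Hc) Hnet HF Hy ltac:(lia)) as Hregret.
  pose proof (regret_rate b c (beta / gamma) mp (epoch N / 2) (epoch N) (INR N) Hb Hc
                ltac:(split; [apply Rdiv_lt_0_compat|]; lra) ltac:(lia) ltac:(lia)
                (epoch_bounds_R N HN1) (HJ0 (epoch N) ltac:(lia))) as Hrate.
  rewrite rsum_minus in Hregret; lra.
Qed.
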